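(* Every cyclic and connected extended representation graph for $E$ is isomorphic to $(F_x,\phi_x)$ for some $x\in X^c$.
   Context: $E=(E^0,E^1,s,r)$ is a row-finite directed graph; for each vertex $v$ emitting an edge a fixed edge $e^v\in s^{-1}(v)$ is called special, others nonspecial. The double graph $E_d$ has vertices $E^0$ and edges $e$ (real) and $e^*$ (ghost) for $e\in E^1$, with $s_d(e)=s(e),r_d(e)=r(e),s_d(e^* )=r(e),r_d(e^* )=s(e)$. For a path $p=e_1\dots e_n$ set $p^*=e_n^*\dots e_1^*$. The set $X$ of basis paths consists of the paths in $E_d$: vertices; $p,p^*$ for paths $p$ of length $\ge1$ in $E$; $pq^*$ with $p=e_1\dots e_k,q=f_1\dots f_n$ of length $\ge1$ in $E$, $r(p)=r(q)$, and $e_k\ne f_n$ or $e_k=f_n$ nonspecial. $X^c$ is the set of closed paths of length $\ge1$ in $E_d$ consisting only of real edges or only of ghost edges. An extended representation graph for $E$ is a pair $(F,\phi)$, $F$ a directed graph, $\phi:F\to E_d$ a graph homomorphism, such that for every $w\in F^0$: (i) $w$ is a source or receives exactly one edge $f_w$; (ii) if $w$ is a source or $\phi(f_w)$ is a nonspecial real edge, $\phi$ maps $s^{-1}(w)$ bijectively onto $s_d^{-1}(\phi(w))$; (iii) if $\phi(f_w)$ is a special real edge, onto $s_d^{-1}(\phi(w))\setminus\{\phi(f_w)^*\}$; (iv) if $\phi(f_w)$ is a ghost edge, onto the ghost edges in $s_d^{-1}(\phi(w))$. An isomorphism $(F,\phi)\to(G,\psi)$ is a graph isomorphism $\alpha$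 with $\psi\circ\alpha=\phi$. $F$ is connected if any two vertices are joined by a path when edge directions are ignored; cyclic if it contains a cycle (closed path of length $\ge1$ whose edges have pairwise distinct sources). $(F_x,\phi_x)$ for $x=x_1\dots x_m\in X^c$: for $1\le i\le m$, $X_i$ = basis paths $y=y_1\dots y_n$, $n\ge1$, with $x_iy_1$ a basis path and $y_1\ne x_{i+1}$ ($x_{m+1}=x_1$). Vertices $w_i$ ($1\le i\le m$), $w_{i,y}$ ($y\in X_i$), all distinct; edges $f_i$ from $w_{i-1}$ to $w_i$ ($w_0=w_m$), and $f_{i,y}$ to $w_{i,y}$ from $w_i$ if $|y|=1$, from $w_{i,y_1\dots y_{n-1}}$ if $n\ge2$; $\phi_x(w_i)=r_d(x_i)$, $\phi_x(w_{i,y})=r_d(y)$, $\phi_x(f_i)=x_i$, $\phi_x(f_{i,y})=$ last edge of $y$. *)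

From Stdlib Require Import List Arith Lia Relations.
Import ListNotations.

Record graph := Graph {
  gV : Type;
  gE : Type;
  gs : gE -> gV;
  gr : gE -> gV
}.

Definition row_finite (E : graph) : Prop :=
  forall v : gV E, exists l : list (gE E), forall e, gs E e = v <-> In e l.

Definition special_choice (E : graph) (sp : gV E -> option (gE E)) : Prop :=
  (forall v e, sp v = Some e -> gs E e = v) /\
  (forall v, sp v = None -> forall e, gs E e <> v).

Definition special (E : graph) (sp : gV E -> option (gE E)) (e : gE E) : Prop :=
  sp (gs E e) = Some e.

(* the double graph E_d: inl e = real edge e, inr e = ghost edge e^* *)
Definition dbl (E : graph) : graph :=
  {| gV := gV E;
     gE := (gE E + gE E)%type;
     gs := fun d => match d with inl e => gs E e | inr e => gr E e end;
     gr := fun d => match d with inl e => gr E e | inr e => gs E e end |}.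

Definition is_real {E : graph} (d : gE (dbl E)) : Prop :=
  match d with inl _ => True | inr _ => False end.
Definition is_ghost {E : graph} (d : gE (dbl E)) : Prop :=
  match d with inl _ => False | inr _ => True end.

Fixpoint gvalid (G : graph) (l : list (gE G)) : Prop :=
  match l with
  | a :: ((b :: _) as t) => gr G a = gs G b /\ gvalid G t
  | _ => True
  end.

Definition gclosed (G : graph) (l : list (gE G)) : Prop :=
  forall f1 l', l = f1 :: l' -> gr G (last l f1) = gs G f1.

Definition cyclic (F : graph) : Prop :=
  exists l : list (gE F), l <> [] /\ gvalid F l /\ gclosed F l /\ NoDup (map (gs F) l).

Definition connected (F : graph) : Prop :=
  forall u v : gV F,
    clos_refl_trans (gV F)
      (fun a b => exists e, (gs F e = a /\ gr F e = b) \/ (gs F e = b /\ gr F e = a)) u v.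

Definition is_ghom (G H : graph) (h0 : gV G -> gV H) (h1 : gE G -> gE H) : Prop :=
  forall e, h0 (gs G e) = gs H (h1 e) /\ h0 (gr G e) = gr H (h1 e).

Definition bij_onto {F H : graph} (phi1 : gE F -> gE H) (w : gV F) (B : gE H -> Prop) : Prop :=
  (forall f, gs F f = w -> B (phi1 f)) /\
  (forall f g, gs F f = w -> gs F g = w -> phi1 f = phi1 g -> f = g) /\
  (forall d, B d -> exists f, gs F f = w /\ phi1 f = d).

Definition ext_rep_graph (E : graph) (sp : gV E -> option (gE E)) (F : graph)
    (phi0 : gV F -> gV (dbl E)) (phi1 : gE F -> gE (dbl E)) : Prop :=
  is_ghom F (dbl E) phi0 phi1 /\
  forall w : gV F,
    ((forall f, gr F f <> w) \/ (exists f, gr F f = w /\ forall g, gr F g = w -> g = f)) /\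
    ((forall f, gr F f <> w) -> bij_onto phi1 w (fun d => gs (dbl E) d = phi0 w)) /\
    (forall f, gr F f = w ->
       (forall e, phi1 f = inl e -> ~ special E sp e ->
          bij_onto phi1 w (fun d => gs (dbl E) d = phi0 w)) /\
       (forall e, phi1 f = inl e -> special E sp e ->
          bij_onto phi1 w (fun d => gs (dbl E) d = phi0 w /\ d <> inr e)) /\
       (forall e, phi1 f = inr e ->
          bij_onto phi1 w (fun d => gs (dbl E) d = phi0 w /\ is_ghost d))).

Definition bijective {A B : Type} (f : A -> B) : Prop :=
  exists g : B -> A, (forall a, g (f a) = a) /\ (forall b, f (g b) = b).

Definition isomorphic (E : graph) (F : graph)
    (phi0 : gV F -> gV (dbl E)) (phi1 : gE F -> gE (dbl E))
    (G : graph) (psi0 : gV G -> gV (dbl E)) (psi1 : gE G -> gE (dbl E)) : Prop :=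
  exists (a0 : gV F -> gV G) (a1 : gE F -> gE G),
    bijective a0 /\ bijective a1 /\ is_ghom F G a0 a1 /\
    (forall v, psi0 (a0 v) = phi0 v) /\ (forall f, psi1 (a1 f) = phi1 f).

(* nonempty basis paths (length >= 1): p, p^*, p q^* ; a list
   map inl p ++ map inr q  encodes p q^*, with q listing the ghost edges in
   the order they are traversed in E_d (so q = [f_n; ...; f_1]). *)
Definition basis (E : graph) (sp : gV E -> option (gE E)) (l : list (gE (dbl E))) : Prop :=
  l <> [] /\ gvalid (dbl E) l /\
  exists p q : list (gE E),
    l = map inl p ++ map inr q /\
    (forall p' e f q', p = p' ++ [e] -> q = f :: q' -> e <> f \/ ~ special E sp e).

Definition in_Xc (E : graph) (x : list (gE (dbl E))) : Prop :=
  x <> [] /\ gvalid (dbl E) x /\ gclosed (dbl E) x /\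
  (Forall is_real x \/ Forall is_ghost x).

(* ---- the graph (F_x, phi_x) for x = x0 :: xs, indices 0-based ---- *)
Section Fx.
Variables (E : graph) (sp : gV E -> option (gE E)) (x0 : gE (dbl E)) (xs : list (gE (dbl E))).

Definition fx_m : nat := S (length xs).
Definition fx_x (i : nat) : gE (dbl E) := nth i (x0 :: xs) x0.

Definition in_Xi (i : nat) (y : list (gE (dbl E))) : Prop :=
  basis E sp y /\
  exists y1 ys, y = y1 :: ys /\ basis E sp [fx_x i; y1] /\ y1 <> fx_x ((i + 1) mod fx_m).

(* (i, []) is w_i ; (i, y) with y in X_i is w_{i,y} *)
Definition fx_vert (p : nat * list (gE (dbl E))) : Prop :=
  fst p < fx_m /\ (snd p = [] \/ in_Xi (fst p) (snd p)).

Definition FxV : Type := { p : nat * list (gE (dbl E)) | fx_vert p }.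

(* index of the source of the edge entering the vertex with index p *)
Definition fx_pred (p : nat * list (gE (dbl E))) : nat * list (gE (dbl E)) :=
  match snd p with
  | [] => ((fst p + fx_m - 1) mod fx_m, [])
  | y => (fst p, removelast y)
  end.

Lemma gvalid_removelast (G : graph) (l : list (gE G)) : gvalid G l -> gvalid G (removelast l).
Proof.
  induction l as [|a t IH]; simpl; auto.
  destruct t as [|b t']; simpl; auto.
  intros [H1 H2]. specialize (IH H2).
  destruct t' as [|c t'']; simpl in *; tauto.
Qed.

Lemma removelast_map {A B : Type} (f : A -> B) (l : list A) :
  removelast (map f l) = map f (removelast l).
Proof.
  induction l as [|a t IH]; simpl; auto.
  destruct t as [|b t']; simpl in *; auto. rewrite IH. reflexivity.
Qed.

Lemma removelast_cons_hd {A : Type} (q : list A) f r :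
  removelast q = f :: r -> exists r', q = f :: r'.
Proof.
  destruct q as [|a t]; simpl; try discriminate.
  destruct t; try discriminate. intros H; inversion H; subst; eauto.
Qed.

Lemma basis_removelast l : basis E sp l -> removelast l <> [] -> basis E sp (removelast l).
Proof.
  intros [Hne [Hv [p [q [Hl Hj]]]]] Hr.
  split; [exact Hr|]. split; [now apply gvalid_removelast|].
  destruct q as [|q1 qt].
  - exists (removelast p), []. split.
    + subst l. simpl. rewrite !app_nil_r. apply removelast_map.
    + intros p' e f q' _ H. discriminate.
  - exists p, (removelast (q1 :: qt)). split.
    + subst l. rewrite removelast_app by (simpl; discriminate).
      now rewrite removelast_map.
    + intros p' e f q' Hp Hq. apply removelast_cons_hd in Hq as [r' Hq].
      eapply Hj; eauto.
Qed.

Lemma fx_pred_vert p : fx_vert p -> fx_vert (fx_pred p).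
Proof.
  destruct p as [i y]. unfold fx_vert, fx_pred; cbn [fst snd].
  intros [Hi Hy]. destruct y as [|y1 yt].
  - cbn [fst snd]. split; [apply Nat.mod_upper_bound; unfold fx_m; lia | now left].
  - cbn [fst snd]. split; [exact Hi|].
    destruct (removelast (y1 :: yt)) as [|z zt] eqn:Hr; [now left|right].
    destruct Hy as [Hy|Hy]; [discriminate|].
    destruct Hy as [Hb [a [b [Hab [Hb2 Hn]]]]].
    split.
    + rewrite <- Hr. apply basis_removelast; auto. now rewrite Hr.
    + apply removelast_cons_hd in Hr as [r' Hr]. rewrite Hab in Hr.
      inversion Hr; subst. exists z, zt. auto.
Qed.

Definition Fx : graph :=
  {| gV := FxV;
     gE := FxV;   (* the edge f_i (resp. f_{i,y}) is indexed by its range w_i (resp. w_{i,y}) *)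
     gs := fun v => exist _ (fx_pred (proj1_sig v)) (fx_pred_vert _ (proj2_sig v));
     gr := fun v => v |}.

Definition phix1 (v : FxV) : gE (dbl E) :=
  match snd (proj1_sig v) with
  | [] => fx_x (fst (proj1_sig v))
  | y => last y x0
  end.

Definition phix0 (v : FxV) : gV (dbl E) := gr (dbl E) (phix1 v).

End Fx.

From Stdlib Require Import List Arith Lia Relations Classical ClassicalEpsilon ProofIrrelevance.
Import ListNotations.

(* Fix a cycle c_0 ... c_(m-1) of F with distinct sources and let x be its
   sequence of labels.  By (ii)-(iv), the labels of the edges leaving the
   range of an edge h are exactly the edges a for which phi(h) a is a basis
   path, and phi is injective on them.  So from c_i one can follow any basis
   path y whose first edge differs from x_(i+1), giving an edge of F for every
   vertex w_(i,y) of F_x.  Since every vertex receives at most one edge and the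
   cycle has distinct sources, these edges are pairwise distinct; walking an
   edge forwards or backwards from one of them lands on another, so by
   connectedness they exhaust F.  Finally a ghost edge can only be followed by
   ghost edges, so x is all real or all ghost. *)

Lemma mod_eq_of_decomp a n q r : r < n -> a = n * q + r -> a mod n = r.
Proof. intros Hr Ha. symmetry. exact (Nat.mod_unique a n q r Hr Ha). Qed.

Lemma pred_mod_succ n i : i < n -> ((i + n - 1) mod n + 1) mod n = i.
Proof.
  intros Hi. rewrite Nat.Div0.add_mod_idemp_l.
  apply (mod_eq_of_decomp _ _ 1 i); lia.
Qed.

Lemma last_default_irrel {A} (l : list A) z z' : l <> [] -> last l z = last l z'.
Proof.
  induction l as [|a [|b t] IH]; cbn; intros Hl; auto.
  - congruence.
  - apply IH. discriminate.
Qed.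

Lemma last_cons {A} (a : A) l z : last (a :: l) z = last l a.
Proof.
  destruct l as [|b l]; [reflexivity|].
  apply (last_default_irrel (b :: l)). discriminate.
Qed.

Lemma last_map {A B} (f : A -> B) l z : last (map f l) (f z) = f (last l z).
Proof. induction l as [|a [|b t] IH]; cbn in *; auto. Qed.

Lemma last_eq_nth {A} (a : A) l z : last (a :: l) z = nth (length l) (a :: l) z.
Proof.
  revert a. induction l as [|b l IH]; intros a; [reflexivity|].
  exact (IH b).
Qed.

Lemma gvalid_nth G (l : list (gE G)) z i :
  gvalid G l -> S i < length l -> gr G (nth i l z) = gs G (nth (S i) l z).
Proof.
  revert i. induction l as [|a [|b t] IH]; intros i Hv Hi; cbn in *; try lia.
  destruct Hv as [Hab Hv]. destruct i as [|i]; [exact Hab|].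
  apply (IH i Hv). cbn. lia.
Qed.

Lemma gvalid_map G H h0 h1 (l : list (gE G)) :
  is_ghom G H h0 h1 -> gvalid G l -> gvalid H (map h1 l).
Proof.
  intros Hh. induction l as [|a [|b t] IH]; cbn; auto.
  intros [Hab Ht]. split; [|exact (IH Ht)].
  rewrite <- (proj2 (Hh a)), <- (proj1 (Hh b)). congruence.
Qed.

Lemma gclosed_map G H h0 h1 (l : list (gE G)) :
  is_ghom G H h0 h1 -> gclosed G l -> gclosed H (map h1 l).
Proof.
  intros Hh Hc f1 l' Hl. destruct l as [|a t]; [discriminate|].
  injection Hl as <- _.
  rewrite last_map, <- (proj2 (Hh _)), (Hc a t eq_refl). apply Hh.
Qed.

Lemma bij_onto_iff {G H : graph} (h1 : gE G -> gE H) w (B B' : gE H -> Prop) :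
  (forall a, B a <-> B' a) -> bij_onto h1 w B -> bij_onto h1 w B'.
Proof.
  intros HB [Hto [Hinj Honto]]. split; [|split; [exact Hinj|]].
  - intros f Hf. apply HB, Hto, Hf.
  - intros a Ha. apply Honto, HB, Ha.
Qed.

Section BasisPaths.
Variables (E : graph) (sp : gV E -> option (gE E)).

(* [follows b a] says that the two-edge path [b a] is a basis path; it is
   also the condition that (ii)-(iv) impose on the label [a] of an edge leaving
   the range of an edge labelled [b]. *)
Definition follows (b a : gE (dbl E)) : Prop :=
  gr (dbl E) b = gs (dbl E) a /\
  match b with inl e => (special E sp e -> a <> inr e) | inr _ => is_ghost a end.

Fixpoint follows_path (b : gE (dbl E)) (l : list (gE (dbl E))) : Prop :=
  match l with [] => True | a :: l' => follows b a /\ follows_path a l' end.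

Lemma follows_path_rcons b l a :
  follows_path b (l ++ [a]) <-> follows_path b l /\ follows (last l b) a.
Proof.
  revert b. induction l as [|c l IH]; intros b; cbn [app follows_path]; [cbn; tauto|].
  rewrite IH, last_cons. tauto.
Qed.

Lemma basis_single a : basis E sp [a].
Proof.
  split; [discriminate|]. split; [exact I|].
  destruct a as [e|e]; [exists [e], [] | exists [], [e]]; (split; [reflexivity|]);
    intros p' e' f q' Hp Hq; [discriminate Hq | destruct p'; discriminate].
Qed.

Lemma basis_cons_cons_inv a b l :
  basis E sp (a :: b :: l) -> follows a b /\ basis E sp (b :: l).
Proof.
  intros [_ [[Hab Hv] [p [q [Hl Hj]]]]].
  destruct p as [|e p]; cbn in Hl.
  - destruct q as [|f [|g q]]; try discriminate.
    injection Hl as -> -> ->.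
    split; [split; [exact Hab|exact I]|].
    split; [discriminate|]. split; [exact Hv|].
    exists [], (g :: q). split; [reflexivity|].
    intros p' e f' q' Hp. destruct p'; discriminate.
  - injection Hl as -> Hl. split.
    + split; [exact Hab|]. intros Hs ->.
      destruct p as [|e' p]; [|discriminate].
      destruct q as [|f q]; [discriminate|].
      injection Hl as Hef _. subst f.
      destruct (Hj [] e e q eq_refl eq_refl); tauto.
    + split; [discriminate|]. split; [exact Hv|].
      exists p, q. split; [exact Hl|].
      intros p' e' f q' Hp. apply (Hj (e :: p')). rewrite Hp. reflexivity.
Qed.

Lemma basis_cons_cons a b l :
  follows a b -> basis E sp (b :: l) -> basis E sp (a :: b :: l).
Proof.
  intros [Hab Hfol] [_ [Hv [p [q [Hl Hj]]]]].
  split; [discriminate|]. split; [split; assumption|].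
  destruct a as [e|e].
  - exists (e :: p), q. split; [cbn; f_equal; exact Hl|].
    intros [|e1 p'] e' f q' Hp Hq; injection Hp as <- Hp.
    + subst p q. injection Hl as -> _.
      destruct (classic (special E sp e)) as [Hs|Hs]; [left|right; exact Hs].
      intros <-. exact (Hfol Hs eq_refl).
    + exact (Hj p' e' f q' Hp Hq).
  - destruct p as [|e1 p]; [|injection Hl as ->; contradiction].
    exists [], (e :: q). split; [cbn in *; congruence|].
    intros p' e' f q' Hp. destruct p'; discriminate.
Qed.

Lemma basis_iff_follows_path a l : basis E sp (a :: l) <-> follows_path a l.
Proof.
  revert a. induction l as [|b l IH]; intros a; cbn.
  - split; [trivial|intros _; apply basis_single].
  - rewrite <- IH. split.
    + apply basis_cons_cons_inv.
    + intros [Hab Hl]. exact (basis_cons_cons a b l Hab Hl).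
Qed.

End BasisPaths.

Section ExtRepGraph.
Variables (E : graph) (sp : gV E -> option (gE E))
  (F : graph) (phi0 : gV F -> gV (dbl E)) (phi1 : gE F -> gE (dbl E)).
Hypothesis HF : ext_rep_graph E sp F phi0 phi1.

Lemma ext_rep_hom f :
  phi0 (gs F f) = gs (dbl E) (phi1 f) /\ phi0 (gr F f) = gr (dbl E) (phi1 f).
Proof. exact (proj1 HF f). Qed.

Lemma in_edge_unique f g : gr F f = gr F g -> f = g.
Proof.
  intros H. destruct (proj2 HF (gr F g)) as [[Hsrc|[h [_ Hh]]] _].
  - exfalso. exact (Hsrc g eq_refl).
  - rewrite (Hh f H), (Hh g eq_refl). reflexivity.
Qed.

Lemma out_edges_follow h : bij_onto phi1 (gr F h) (follows E sp (phi1 h)).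
Proof.
  destruct (proj2 HF (gr F h)) as [_ [_ Hin]].
  destruct (Hin h eq_refl) as [Hnonspecial [Hspecial Hghost]].
  pose proof (proj2 (ext_rep_hom h)) as Hh.
  unfold follows. destruct (phi1 h) as [e|e].
  - destruct (classic (special E sp e)) as [Hs|Hs].
    + eapply bij_onto_iff; [|exact (Hspecial e eq_refl Hs)].
      intros a. rewrite Hh. intuition congruence.
    + eapply bij_onto_iff; [|exact (Hnonspecial e eq_refl Hs)].
      intros a. rewrite Hh. intuition congruence.
  - eapply bij_onto_iff; [|exact (Hghost e eq_refl)].
    intros a. rewrite Hh. intuition congruence.
Qed.

Lemma out_edge_inj f g : gs F f = gs F g -> phi1 f = phi1 g -> f = g.
Proof.
  intros Hs Hl.
  destruct (classic (exists h, gr F h = gs F g)) as [[h Hh]|Hnone].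
  - destruct (out_edges_follow h) as [_ [Hinj _]]. apply Hinj; congruence.
  - destruct (proj2 HF (gs F g)) as [_ [Hsrc _]].
    destruct Hsrc as [_ [Hinj _]]; [intros h Hh; apply Hnone; eauto|].
    apply Hinj; auto.
Qed.

Definition next_edge (h : gE F) (a : gE (dbl E)) : gE F :=
  epsilon (inhabits h) (fun f => gs F f = gr F h /\ phi1 f = a).

Lemma next_edge_spec h a : follows E sp (phi1 h) a ->
  gs F (next_edge h a) = gr F h /\ phi1 (next_edge h a) = a.
Proof.
  intros Ha. unfold next_edge. apply epsilon_spec.
  destruct (out_edges_follow h) as [_ [_ Honto]].
  destruct (Honto a Ha) as [f Hf]. eauto.
Qed.

Fixpoint walk (h : gE F) (y : list (gE (dbl E))) : gE F :=
  match y with [] => h | a :: y' => walk (next_edge h a) y' end.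

Lemma walk_rcons h y a : walk h (y ++ [a]) = next_edge (walk h y) a.
Proof. revert h. induction y as [|b y IH]; intros h; cbn; auto. Qed.

Lemma label_walk h y : follows_path E sp (phi1 h) y -> phi1 (walk h y) = last y (phi1 h).
Proof.
  revert h. induction y as [|a y IH]; intros h; cbn; [reflexivity|].
  intros [Ha Hy]. destruct (next_edge_spec h a Ha) as [_ Hl].
  rewrite IH, Hl; [|rewrite Hl; exact Hy]. symmetry. apply last_cons.
Qed.

Lemma walk_rcons_spec h y a : follows_path E sp (phi1 h) (y ++ [a]) ->
  gs F (walk h (y ++ [a])) = gr F (walk h y) /\ phi1 (walk h (y ++ [a])) = a.
Proof.
  intros Hy. apply follows_path_rcons in Hy as [Hy Ha].
  rewrite walk_rcons. apply next_edge_spec. rewrite label_walk; assumption.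
Qed.

Section Cycle.
Variables (d : gE F) (ls : list (gE F)).
Hypotheses (Hval : gvalid F (d :: ls)) (Hclo : gclosed F (d :: ls))
  (Hsrc : NoDup (map (gs F) (d :: ls))).

Definition cyc_len : nat := S (length ls).
Definition cyc (i : nat) : gE F := nth i (d :: ls) d.
Definition cyc_lab (i : nat) : gE (dbl E) := phi1 (cyc i).

Lemma cyc_len_neq0 : cyc_len <> 0.
Proof. discriminate. Qed.

Lemma cyc_succ i : i < cyc_len -> gr F (cyc i) = gs F (cyc ((i + 1) mod cyc_len)).
Proof.
  unfold cyc_len. intros Hi.
  destruct (Nat.eq_dec i (length ls)) as [->|Hne].
  - rewrite (mod_eq_of_decomp _ _ 1 0) by lia.
    unfold cyc. rewrite <- last_eq_nth. exact (Hclo d ls eq_refl).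
  - rewrite (mod_eq_of_decomp _ _ 0 (S i)) by lia.
    apply gvalid_nth; [exact Hval | cbn; lia].
Qed.

Lemma cyc_pred i : i < cyc_len -> gr F (cyc ((i + cyc_len - 1) mod cyc_len)) = gs F (cyc i).
Proof.
  intros Hi. rewrite cyc_succ by exact (Nat.mod_upper_bound _ _ cyc_len_neq0).
  rewrite pred_mod_succ by exact Hi. reflexivity.
Qed.

Lemma cyc_src_inj i j : i < cyc_len -> j < cyc_len -> gs F (cyc i) = gs F (cyc j) -> i = j.
Proof.
  intros Hi Hj H.
  apply (proj1 (NoDup_nth (map (gs F) (d :: ls)) (gs F d)) Hsrc); rewrite ?length_map; auto.
  unfold cyc in H. rewrite !map_nth. exact H.
Qed.

Lemma cyc_follows i : i < cyc_len -> follows E sp (cyc_lab i) (cyc_lab ((i + 1) mod cyc_len)).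
Proof.
  intros Hi. apply (proj1 (out_edges_follow (cyc i))). symmetry. exact (cyc_succ i Hi).
Qed.

Lemma cyc_lab_ghost_succ i : i < cyc_len ->
  is_ghost (cyc_lab i) -> is_ghost (cyc_lab ((i + 1) mod cyc_len)).
Proof.
  intros Hi. pose proof (proj2 (cyc_follows i Hi)) as H.
  destruct (cyc_lab i); cbn in *; tauto.
Qed.

Lemma cyc_lab_ghost_all j : j < cyc_len -> is_ghost (cyc_lab j) ->
  forall i, i < cyc_len -> is_ghost (cyc_lab i).
Proof.
  intros Hj Hg.
  assert (Hk : forall k, is_ghost (cyc_lab ((j + k) mod cyc_len))).
  { induction k as [|k IH].
    - rewrite Nat.add_0_r, Nat.mod_small by exact Hj. exact Hg.
    - apply cyc_lab_ghost_succ in IH; [|exact (Nat.mod_upper_bound _ _ cyc_len_neq0)].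
      rewrite Nat.Div0.add_mod_idemp_l in IH. rewrite <- Nat.add_1_r, Nat.add_assoc. exact IH. }
  intros i Hi. specialize (Hk (i + cyc_len - j)).
  rewrite (mod_eq_of_decomp _ _ 1 i) in Hk by lia. exact Hk.
Qed.

(* [(i, [])] and [(i, y)] index the vertices [w_i] and [w_(i,y)] of [F_x]. *)
Definition vertex_index (i : nat) (y : list (gE (dbl E))) : Prop :=
  i < cyc_len /\
  (y = [] \/ (follows_path E sp (cyc_lab i) y /\
              forall y1 ys, y = y1 :: ys -> y1 <> cyc_lab ((i + 1) mod cyc_len))).

Lemma vertex_index_follows_path i y : vertex_index i y -> follows_path E sp (cyc_lab i) y.
Proof. intros [_ [->|[Hy _]]]; [exact I|exact Hy]. Qed.

Lemma vertex_index_rcons i y a : vertex_index i (y ++ [a]) -> vertex_index i y.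
Proof.
  intros [Hi [Hnil|[Hy Hoff]]]; [destruct y; discriminate|].
  split; [exact Hi|]. destruct y as [|b y]; [left; reflexivity|right].
  apply follows_path_rcons in Hy as [Hy _]. split; [exact Hy|].
  intros y1 ys Hb. injection Hb as -> ->. exact (Hoff y1 (ys ++ [a]) eq_refl).
Qed.

Lemma walk_off_cycle y : forall i, vertex_index i y -> y <> [] ->
  forall j, j < cyc_len -> walk (cyc i) y <> cyc j.
Proof.
  induction y as [|a y IH] using rev_ind; intros i Hy Hne j Hj Heq; [congruence|].
  pose proof (vertex_index_rcons _ _ _ Hy) as Hy'.
  destruct (walk_rcons_spec _ _ _ (vertex_index_follows_path _ _ Hy)) as [Hs Hl].
  rewrite Heq in Hs, Hl.
  destruct y as [|b y].
  - cbn [walk] in Hs. rewrite cyc_succ in Hs by apply Hy.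
    apply cyc_src_inj in Hs; [subst j | exact Hj | apply Nat.mod_upper_bound, cyc_len_neq0].
    destruct Hy as [_ [Hnil|[_ Hoff]]]; [discriminate|].
    exact (Hoff a [] eq_refl (eq_sym Hl)).
  - rewrite <- (cyc_pred j Hj) in Hs. apply in_edge_unique in Hs.
    exact (IH i Hy' ltac:(discriminate) _ (Nat.mod_upper_bound _ _ cyc_len_neq0) (eq_sym Hs)).
Qed.

Lemma walk_inj y : forall i i' y', vertex_index i y -> vertex_index i' y' ->
  walk (cyc i) y = walk (cyc i') y' -> i = i' /\ y = y'.
Proof.
  induction y as [|a y IH] using rev_ind; intros i i' y' Hy Hy' Heq.
  - destruct y' as [|b y'].
    + split; [|reflexivity]. cbn [walk] in Heq.
      apply cyc_src_inj; [apply Hy | apply Hy' | rewrite Heq; reflexivity].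
    + exfalso. exact (walk_off_cycle _ _ Hy' ltac:(discriminate) i (proj1 Hy) (eq_sym Heq)).
  - destruct y' as [|b y' _] using rev_ind.
    + exfalso.
      exact (walk_off_cycle _ _ Hy ltac:(destruct y; discriminate) i' (proj1 Hy') Heq).
    + destruct (walk_rcons_spec _ _ _ (vertex_index_follows_path _ _ Hy)) as [Hs1 Hl1].
      destruct (walk_rcons_spec _ _ _ (vertex_index_follows_path _ _ Hy')) as [Hs2 Hl2].
      rewrite Heq in Hs1, Hl1. rewrite Hl1 in Hl2. subst b.
      assert (Hw : walk (cyc i) y = walk (cyc i') y') by (apply in_edge_unique; congruence).
      destruct (IH i i' y' (vertex_index_rcons _ _ _ Hy) (vertex_index_rcons _ _ _ Hy') Hw)
        as [-> ->].
      split; reflexivity.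
Qed.

Definition parent_index (p : nat * list (gE (dbl E))) : nat * list (gE (dbl E)) :=
  match snd p with
  | [] => ((fst p + cyc_len - 1) mod cyc_len, [])
  | y => (fst p, removelast y)
  end.

Lemma parent_index_rcons i y a : parent_index (i, y ++ [a]) = (i, y).
Proof.
  destruct y as [|b y]; [reflexivity|].
  change ((i, removelast ((b :: y) ++ [a])) = (i, b :: y)).
  rewrite removelast_last. reflexivity.
Qed.

Lemma walk_parent i y j z : vertex_index i y -> parent_index (i, y) = (j, z) ->
  vertex_index j z /\ gr F (walk (cyc j) z) = gs F (walk (cyc i) y).
Proof.
  intros Hy. destruct y as [|a y _] using rev_ind.
  - intros Hp. apply pair_equal_spec in Hp as [<- <-]. split.
    + split; [apply Nat.mod_upper_bound, cyc_len_neq0 | left; reflexivity].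
    + apply cyc_pred, Hy.
  - rewrite parent_index_rcons. intros Hp. apply pair_equal_spec in Hp as [<- <-].
    split; [exact (vertex_index_rcons _ _ _ Hy)|].
    symmetry. exact (proj1 (walk_rcons_spec _ _ _ (vertex_index_follows_path _ _ Hy))).
Qed.

Lemma walk_child i y e : vertex_index i y -> gs F e = gr F (walk (cyc i) y) ->
  exists j z, vertex_index j z /\ walk (cyc j) z = e.
Proof.
  intros Hy He. set (h := walk (cyc i) y) in *.
  assert (Hfol : follows E sp (phi1 h) (phi1 e))
    by exact (proj1 (out_edges_follow h) e He).
  assert (Hnext : e = next_edge h (phi1 e)).
  { destruct (next_edge_spec h _ Hfol) as [Hs Hl]. apply out_edge_inj; congruence. }
  destruct Hy as [Hi Hy]. destruct y as [|b y].
  - destruct (classic (phi1 e = cyc_lab ((i + 1) mod cyc_len))) as [Hon|Hoff].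
    + exists ((i + 1) mod cyc_len), []. split.
      * split; [apply Nat.mod_upper_bound, cyc_len_neq0 | left; reflexivity].
      * apply out_edge_inj; [|exact (eq_sym Hon)].
        rewrite He. symmetry. exact (cyc_succ i Hi).
    + exists i, [phi1 e]. split; [|exact (eq_sym Hnext)].
      split; [exact Hi|right]. split; [split; [exact Hfol|exact I]|].
      intros y1 ys Hy1. injection Hy1 as <- _. exact Hoff.
  - destruct Hy as [Hnil|[Hy Hoff]]; [discriminate|].
    exists i, ((b :: y) ++ [phi1 e]). split; [|rewrite walk_rcons; exact (eq_sym Hnext)].
    split; [exact Hi|right]. split.
    + apply follows_path_rcons. split; [exact Hy|].
      unfold cyc_lab. rewrite <- (label_walk _ _ Hy). exact Hfol.
    + intros y1 ys Hy1. injection Hy1 as <- _. exact (Hoff b y eq_refl).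
Qed.

Hypothesis Hconn : connected F.

Lemma walk_surj v : exists i y, vertex_index i y /\ gr F (walk (cyc i) y) = v.
Proof.
  pose proof (Hconn (gr F (cyc 0)) v) as Hpath. apply clos_rt_rt1n in Hpath.
  assert (Hstart : exists i y, vertex_index i y /\ gr F (walk (cyc i) y) = gr F (cyc 0)).
  { exists 0, []. split; [split; [unfold cyc_len; lia | left; reflexivity] | reflexivity]. }
  revert Hstart. induction Hpath as [u|u u' w Hstep _ IH]; [trivial|].
  intros [i [y [Hy Hu]]]. apply IH.
  destruct Hstep as [e [[Hs Hr]|[Hs Hr]]].
  - destruct (walk_child i y e Hy ltac:(congruence)) as [j [z [Hz He]]].
    exists j, z. split; [exact Hz|]. rewrite He. exact Hr.
  - destruct (parent_index (i, y)) as [j z] eqn:Hp.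
    destruct (walk_parent i y j z Hy Hp) as [Hz Hw].
    exists j, z. split; [exact Hz|]. rewrite Hw.
    rewrite <- (in_edge_unique e _ (eq_trans Hr (eq_sym Hu))). exact Hs.
Qed.

Local Notation x0 := (phi1 d).
Local Notation xs := (map phi1 ls).

Lemma fx_m_cyc_len : fx_m E xs = cyc_len.
Proof. unfold fx_m, cyc_len. rewrite length_map. reflexivity. Qed.

Lemma fx_x_cyc_lab i : fx_x E x0 xs i = cyc_lab i.
Proof. exact (map_nth phi1 (d :: ls) d i). Qed.

Lemma fx_pred_parent_index p : fx_pred E xs p = parent_index p.
Proof. unfold fx_pred, parent_index. rewrite fx_m_cyc_len. reflexivity. Qed.

Lemma fx_vert_iff p : fx_vert E sp x0 xs p <-> vertex_index (fst p) (snd p).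
Proof.
  destruct p as [i y]. unfold fx_vert, vertex_index, in_Xi. cbn [fst snd].
  rewrite fx_m_cyc_len, !fx_x_cyc_lab.
  split; intros [Hi Hy]; (split; [exact Hi|]); destruct Hy as [Hnil|Hy]; auto.
  - right. destruct Hy as [Hb [y1 [ys [-> [Hb1 Hoff]]]]].
    apply basis_iff_follows_path in Hb, Hb1. split.
    + split; [exact (proj1 Hb1) | exact Hb].
    + intros a b Hab. injection Hab as <- <-. exact Hoff.
  - destruct y as [|y1 ys]; [left; reflexivity|right].
    destruct Hy as [[Hfol Hys] Hoff].
    split; [apply basis_iff_follows_path; exact Hys|].
    exists y1, ys. split; [reflexivity|]. split.
    + apply basis_iff_follows_path. split; [exact Hfol|exact I].
    + exact (Hoff y1 ys eq_refl).
Qed.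

Definition embed (v : FxV E sp x0 xs) : gE F :=
  walk (cyc (fst (proj1_sig v))) (snd (proj1_sig v)).

Lemma embed_inj u v : embed u = embed v -> u = v.
Proof.
  destruct u as [[i y] Hu], v as [[j z] Hv]. unfold embed. cbn. intros H.
  destruct (walk_inj y i j z (proj1 (fx_vert_iff _) Hu) (proj1 (fx_vert_iff _) Hv) H)
    as [<- <-].
  apply subset_eq_compat. reflexivity.
Qed.

Lemma embed_label v : phi1 (embed v) = phix1 E sp x0 xs v.
Proof.
  destruct v as [[i y] Hv]. pose proof (proj1 (fx_vert_iff _) Hv) as Hy.
  unfold embed, phix1. cbn [proj1_sig fst snd] in *.
  destruct y as [|a y].
  - symmetry. apply fx_x_cyc_lab.
  - rewrite (label_walk _ _ (vertex_index_follows_path _ _ Hy)).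
    apply last_default_irrel. discriminate.
Qed.

Lemma embed_src v : gr F (embed (gs (Fx E sp x0 xs) v)) = gs F (embed v).
Proof.
  destruct v as [[i y] Hv]. unfold embed. cbn [gs Fx proj1_sig].
  rewrite fx_pred_parent_index.
  destruct (parent_index (i, y)) as [j z] eqn:Hp.
  exact (proj2 (walk_parent i y j z (proj1 (fx_vert_iff _) Hv) Hp)).
Qed.

Lemma embed_surj_vert w : exists v, gr F (embed v) = w.
Proof.
  destruct (walk_surj w) as [i [y [Hy Hw]]].
  exists (exist _ (i, y) (proj2 (fx_vert_iff (i, y)) Hy)). exact Hw.
Qed.

Lemma embed_surj f : exists v, embed v = f.
Proof.
  destruct (embed_surj_vert (gr F f)) as [v Hv].
  exists v. apply in_edge_unique. exact Hv.
Qed.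

Definition iso_vert (w : gV F) : FxV E sp x0 xs :=
  proj1_sig (constructive_indefinite_description _ (embed_surj_vert w)).

Definition iso_edge (f : gE F) : FxV E sp x0 xs :=
  proj1_sig (constructive_indefinite_description _ (embed_surj f)).

Lemma embed_iso_vert w : gr F (embed (iso_vert w)) = w.
Proof. exact (proj2_sig (constructive_indefinite_description _ (embed_surj_vert w))). Qed.

Lemma embed_iso_edge f : embed (iso_edge f) = f.
Proof. exact (proj2_sig (constructive_indefinite_description _ (embed_surj f))). Qed.

Lemma iso_vert_eq w v : gr F (embed v) = w -> iso_vert w = v.
Proof. intros H. apply embed_inj, in_edge_unique. rewrite embed_iso_vert. exact (eq_sym H). Qed.

Lemma fx_iso :
  isomorphic E F phi0 phi1 (Fx E sp x0 xs) (phix0 E sp x0 xs) (phix1 E sp x0 xs).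
Proof.
  exists iso_vert, iso_edge. split; [|split; [|split; [|split]]].
  - exists (fun v => gr F (embed v)). split; [exact embed_iso_vert|].
    intros v. apply iso_vert_eq. reflexivity.
  - exists embed. split; [exact embed_iso_edge|].
    intros v. apply embed_inj, embed_iso_edge.
  - intros f. split; apply iso_vert_eq.
    + rewrite embed_src, embed_iso_edge. reflexivity.
    + exact (f_equal (gr F) (embed_iso_edge f)).
  - intros w. unfold phix0.
    rewrite <- embed_label, <- (proj2 (ext_rep_hom _)), embed_iso_vert. reflexivity.
  - intros f. rewrite <- embed_label, embed_iso_edge. reflexivity.
Qed.

Lemma cycle_labels_in_Xc : in_Xc E (x0 :: xs).
Proof.
  split; [discriminate|]. split; [|split].
  - exact (gvalid_map _ _ _ _ (d :: ls) (proj1 HF) Hval).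
  - exact (gclosed_map _ _ _ _ (d :: ls) (proj1 HF) Hclo).
  - assert (Hlab : forall a, In a (x0 :: xs) -> exists i, i < cyc_len /\ cyc_lab i = a).
    { intros a Ha. change (In a (map phi1 (d :: ls))) in Ha.
      destruct (In_nth _ _ x0 Ha) as [i [Hi <-]]. rewrite length_map in Hi.
      exists i. split; [exact Hi | symmetry; apply map_nth]. }
    destruct (classic (exists j, j < cyc_len /\ is_ghost (cyc_lab j))) as [[j [Hj Hg]]|Hreal].
    + right. apply Forall_forall. intros a Ha. destruct (Hlab a Ha) as [i [Hi <-]].
      exact (cyc_lab_ghost_all j Hj Hg i Hi).
    + left. apply Forall_forall. intros a Ha. destruct (Hlab a Ha) as [i [Hi <-]].
      destruct (cyc_lab i) as [e|e] eqn:Hei; [exact I|].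
      exfalso. apply Hreal. exists i. rewrite Hei. split; [exact Hi|exact I].
Qed.

End Cycle.

End ExtRepGraph.

Theorem proposition5p16 (E : graph) (sp : gV E -> option (gE E))
    (Hrf : row_finite E) (Hsp : special_choice E sp)
    (F : graph) (phi0 : gV F -> gV (dbl E)) (phi1 : gE F -> gE (dbl E))
    (HF : ext_rep_graph E sp F phi0 phi1)
    (Hcyc : cyclic F) (Hconn : connected F) :
  exists (x0 : gE (dbl E)) (xs : list (gE (dbl E))),
    in_Xc E (x0 :: xs) /\
    isomorphic E F phi0 phi1 (Fx E sp x0 xs) (phix0 E sp x0 xs) (phix1 E sp x0 xs).
Proof.
  destruct Hcyc as [[|d ls] [Hne [Hval [Hclo Hsrc]]]]; [congruence|].
  exists (phi1 d), (map phi1 ls). split.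
  - eapply cycle_labels_in_Xc; eassumption.
  - eapply fx_iso; eassumption.
Qed.
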